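(* Every generalized conical $\mathcal{G}$-coding $(g_0,\mathbf e)$ codes exactly one point of $\partial(\Gamma,\mathcal{P})$, and this point is a conical limit point.
   Context: Setup. $\Gamma$ is a finitely generated group hyperbolic relative to a finite nonempty collection $\mathcal{P}$ of infinite subgroups, with $(\Gamma,\mathcal{P})$ non-elementary, and $\mathcal{S}$ a finite symmetric generating set with $P\cap\mathcal{S}$ generating $P$ for each $P\in\mathcal{P}$. $X$ is the Groves–Manning cusped space (the Cayley graph with combinatorial horoballs glued along the cosets $gP$), a locally finite graph with unit edges, metric $d_X$, $\delta$-hyperbolic for a fixed integer $\delta\ge1$; $|g|_X=d_X(\mathrm{id},g)$. Its Gromov boundary is the Bowditch boundary $\partial(\Gamma,\mathcal{P})$, with a fixed metric $d_\partial$ (balls $B_r$, neighborhoods $N_r$, closed neighborhoods $\overline N_r$, $\operatorname{diam}$ w.r.t. $d_\partial$). $\Pi$ is the finite set of points fixed by groups in $\mathcal{P}$, $\Gamma_p$ the group fixing $p\in\Pi$; translates $gp$ are parabolic points, and all other boundary points are conical limit points. $D>0$ is such that any distinct $x,y$ have some $g\in\Gamma$ with $d_\partial(gx,gy)>D$; for $p\in\Pi$, $K_p\subset\partial(\Gamma,\mathcal{P})\setminus\{p\}$ is compact with $\Gamma_pK_p=\partial(\Gamma,\mathcal{P})\setminus\{p\}$, and $D_\Pi>0$ satisfies $D_\Pi<\operatorname{diam}K_p$, $D_\Pi<d_\partial(K_p,p)$ for all $p$. Automaton. Fix $0<\varepsilon<\min(D/5,D_\Pi/5)$, a finite set $Z\subset\partial(\Gamma,\mathcal{P})$,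 and for each $z\in Z$ open sets $V(z),W(z),\hat V(z),\hat W(z)$ and a set $L(z)\subset\Gamma$ such that: if $z$ is conical, $L(z)=\{\alpha_z\}$, $\hat V(z)=\alpha_z^{-1}V(z)$, $\hat W(z)=\alpha_z^{-1}W(z)$; if $z=gp$ is parabolic ($p\in\Pi$), then $L(z)=g\Gamma_p\setminus F_z$ for a finite set $F_z$, $\hat V(z)\subset\hat W(z)\subset\partial(\Gamma,\mathcal{P})\setminus\{p\}$ and $p\notin\overline N_\varepsilon(\hat W(z))$; the sets $V(z)$, $z\in Z$, cover $\partial(\Gamma,\mathcal{P})$; and for all $z\in Z$: (C1) $\operatorname{diam}W(z)<\varepsilon$; (C2) $\operatorname{diam}\hat W(z)>4\varepsilon$; (C3) $\overline N_{2\varepsilon}(\hat V(z))\subset\hat W(z)$; (C4) $W(z)=\{z\}\cup\bigcup_{\alpha\in L(z)}\alpha\hat W(z)$; (C5) $V(z)=\{z\}\cup\bigcup_{\alpha\in L(z)}\alpha\hat V(z)$ and $\overline{V(z)}\subset W(z)$; (C6) for all $y,z\in Z$, $\overline{\hat V(z)}\cap\overline{V(y)}=\emptyset$ iff $\hat V(z)\cap V(y)=\emptyset$. The automaton $\mathcal{G}$ is the directed graph with vertex set $Z$ where, for $y,z\in Z$, there is no edge from $z$ to $y$ if $\hat V(z)\cap V(y)=\emptyset$, and otherwise there is exactly one edge from $z$ to $y$ labeled $\alpha$ for each $\alpha\in L(z)$. For an edge $e$, $\iota(e),\tau(e),\mathrm{Lab}(e)$ denote its initial vertex, terminal vertex and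 label. Codings. A strict conical coding is an infinite edge path $\mathbf e=(e_k)_{k\ge1}$ in $\mathcal{G}$; writing $\alpha_k=\mathrm{Lab}(e_k)$, $z_k=\tau(e_k)$ ($k\ge1$), $z_0=\iota(e_1)$, it is a strict coding of $\zeta$ if $\zeta\in\bigcap_{k\ge0}\alpha_1\cdots\alpha_k\overline{W(z_k)}$. A generalized conical coding is a pair $(g_0,\mathbf e)$ with $g_0\in\Gamma$ and $\mathbf e$ a strict conical coding; if $\mathbf e$ codes $\xi$, then $(g_0,\mathbf e)$ codes $g_0\xi$. *)

From Stdlib Require Import Reals List Classical.
Open Scope R_scope.

Definition is_group {G : Type} (mul : G -> G -> G) (inv : G -> G) (e : G) : Prop :=
  (forall a b c, mul a (mul b c) = mul (mul a b) c) /\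
  (forall a, mul e a = a) /\ (forall a, mul a e = a) /\
  (forall a, mul (inv a) a = e) /\ (forall a, mul a (inv a) = e).

Definition word_prod {G : Type} (mul : G -> G -> G) (e : G) (l : list G) : G :=
  fold_right mul e l.

Definition finite_set {T : Type} (H : T -> Prop) : Prop :=
  exists l : list T, forall x, H x -> In x l.

Definition is_metric {B : Type} (d : B -> B -> R) : Prop :=
  (forall x y, 0 <= d x y) /\ (forall x y, d x y = 0 <-> x = y) /\
  (forall x y, d x y = d y x) /\ (forall x y z, d x z <= d x y + d y z).

Definition seq_converges {B : Type} (d : B -> B -> R) (u : nat -> B) (x : B) : Prop :=
  forall eps, 0 < eps -> exists N, forall n, (N <= n)%nat -> d (u n) x < eps.

Definition strictly_incr (phi : nat -> nat) : Prop := forall n, (phi n < phi (S n))%nat.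

(** (sequential) compactness, equivalent to compactness in a metric space *)
Definition m_compact_set {B : Type} (d : B -> B -> R) (K : B -> Prop) : Prop :=
  forall u : nat -> B, (forall n, K (u n)) ->
    exists phi, strictly_incr phi /\ exists x, K x /\ seq_converges d (fun n => u (phi n)) x.

Definition m_open_set {B : Type} (d : B -> B -> R) (A : B -> Prop) : Prop :=
  forall x, A x -> exists r, 0 < r /\ forall y, d x y < r -> A y.

Definition m_closure {B : Type} (d : B -> B -> R) (A : B -> Prop) : B -> Prop :=
  fun x => forall s, 0 < s -> exists a, A a /\ d x a < s.

(** closed [r]-neighbourhood  {x | d(x,A) <= r} *)
Definition closed_nbhd {B : Type} (d : B -> B -> R) (r : R) (A : B -> Prop) : B -> Prop :=
  fun x => forall s, r < s -> exists a, A a /\ d x a < s.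

Definition diam_lt {B : Type} (d : B -> B -> R) (A : B -> Prop) (c : R) : Prop :=
  exists r, r < c /\ forall x y, A x -> A y -> d x y <= r.

Definition diam_gt {B : Type} (d : B -> B -> R) (A : B -> Prop) (c : R) : Prop :=
  exists x y, A x /\ A y /\ c < d x y.

Definition setdist_gt {B : Type} (d : B -> B -> R) (A : B -> Prop) (p : B) (c : R) : Prop :=
  exists r, c < r /\ forall a, A a -> r <= d a p.

Definition is_action {G B : Type} (mul : G -> G -> G) (e : G) (act : G -> B -> B) : Prop :=
  (forall x, act e x = x) /\ (forall g h x, act (mul g h) x = act g (act h x)).

Definition continuous_map {B : Type} (d : B -> B -> R) (f : B -> B) : Prop :=
  forall x eps, 0 < eps -> exists del, 0 < del /\ forall y, d x y < del -> d (f x) (f y) < eps.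

Definition loc_unif_conv {G B : Type} (d : B -> B -> R) (act : G -> B -> B)
    (g : nat -> G) (a b : B) : Prop :=
  forall K, m_compact_set d K -> (forall x, K x -> x <> a) ->
    forall eps, 0 < eps -> exists N, forall n, (N <= n)%nat ->
      forall x, K x -> d (act (g n) x) b < eps.

Definition convergence_action {G B : Type} (d : B -> B -> R) (act : G -> B -> B) : Prop :=
  forall g : nat -> G, (forall m n, g m = g n -> m = n) ->
    exists phi, strictly_incr phi /\ exists a b,
      loc_unif_conv d act (fun n => g (phi n)) a b.

Definition conical_limit_point {G B : Type} (d : B -> B -> R) (act : G -> B -> B) (x : B) : Prop :=
  exists (g : nat -> G) (a b : B), a <> b /\
    seq_converges d (fun n => act (g n) x) a /\ loc_unif_conv d act g x b.

Definition stabilizer {G B : Type} (act : G -> B -> B) (p : B) : G -> Prop :=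
  fun h => act h p = p.

Fixpoint gpow {G : Type} (mul : G -> G -> G) (e : G) (g : G) (n : nat) : G :=
  match n with O => e | S n => mul g (gpow mul e g n) end.

Definition loxodromic {G B : Type} (mul : G -> G -> G) (e : G) (act : G -> B -> B) (g : G) : Prop :=
  (forall n, (1 <= n)%nat -> gpow mul e g n <> e) /\
  exists a b, a <> b /\ act g a = a /\ act g b = b /\
    forall x, act g x = x -> x = a \/ x = b.

Definition parabolic_point {G B : Type} (mul : G -> G -> G) (e : G) (act : G -> B -> B) (p : B) : Prop :=
  ~ finite_set (stabilizer act p) /\
  forall h, stabilizer act p h -> ~ loxodromic mul e act h.

Definition bounded_parabolic {G B : Type} (d : B -> B -> R) (mul : G -> G -> G) (e : G)
    (act : G -> B -> B) (p : B) : Prop :=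
  parabolic_point mul e act p /\
  exists K, m_compact_set d K /\ (forall x, K x -> x <> p) /\
    forall x, x <> p -> exists h k, stabilizer act p h /\ K k /\ x = act h k.

(** [(G, Ps)] is relatively hyperbolic with Bowditch boundary [(B, d, act)], in
    Bowditch's dynamical formulation: [act] is a geometrically finite convergence
    action by homeomorphisms on the compact metric space [B], and [Ps] is a list of
    representatives of the conjugacy classes of maximal parabolic subgroups, namely
    [nth i Ps] is the stabilizer of [nth i Pi], the points of [Pi] are bounded
    parabolic and lie in pairwise distinct orbits, and every bounded parabolic
    point lies in the orbit of a point of [Pi]. *)
Definition rel_hyp_boundary {G B : Type} (mul : G -> G -> G) (inv : G -> G) (e : G)
    (Ps : list (G -> Prop)) (B0 : B) (d : B -> B -> R) (act : G -> B -> B) (Pi : list B) : Prop :=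
  is_metric d /\ m_compact_set d (fun _ => True) /\
  is_action mul e act /\ (forall g, continuous_map d (act g)) /\
  convergence_action d act /\
  (forall x, conical_limit_point d act x \/ bounded_parabolic d mul e act x) /\
  length Ps = length Pi /\
  (forall i, (i < length Pi)%nat ->
     forall h, nth i Ps (fun _ => False) h <-> stabilizer act (nth i Pi B0) h) /\
  (forall p, In p Pi -> bounded_parabolic d mul e act p) /\
  (forall i j g, (i < length Pi)%nat -> (j < length Pi)%nat ->
     act g (nth i Pi B0) = nth j Pi B0 -> i = j) /\
  (forall x, bounded_parabolic d mul e act x -> exists g p, In p Pi /\ x = act g p).

(** parabolic points in the sense of the paper: translates of points of Pi *)
Definition in_parabolic_orbit {G B : Type} (act : G -> B -> B) (Pi : list B) (x : B) : Prop :=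
  exists g p, In p Pi /\ x = act g p.

Definition is_edge {G B : Type} (Z : list B) (Vh V : B -> B -> Prop) (L : B -> G -> Prop)
    (z : B) (a : G) (y : B) : Prop :=
  In z Z /\ In y Z /\ L z a /\ exists x, Vh z x /\ V y x.

(** an infinite edge path e_1 e_2 ... given by vertices [zs k] = z_k (k >= 0)
    and labels [als k] = alpha_{k+1}: e_{k+1} goes from z_k to z_{k+1} *)
Definition edge_path {G B : Type} (Z : list B) (Vh V : B -> B -> Prop) (L : B -> G -> Prop)
    (zs : nat -> B) (als : nat -> G) : Prop :=
  forall k, is_edge Z Vh V L (zs k) (als k) (zs (S k)).

Fixpoint label_prod {G : Type} (mul : G -> G -> G) (e : G) (als : nat -> G) (k : nat) : G :=
  match k with O => e | S k => mul (label_prod mul e als k) (als k) end.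

Definition strict_codes {G B : Type} (mul : G -> G -> G) (e : G) (d : B -> B -> R)
    (act : G -> B -> B) (W : B -> B -> Prop) (zs : nat -> B) (als : nat -> G) (zeta : B) : Prop :=
  forall k, exists y, m_closure d (W (zs k)) y /\ zeta = act (label_prod mul e als k) y.

Definition gen_codes {G B : Type} (mul : G -> G -> G) (e : G) (d : B -> B -> R)
    (act : G -> B -> B) (W : B -> B -> Prop) (g0 : G) (zs : nat -> B) (als : nat -> G) (x : B) : Prop :=
  exists xi, strict_codes mul e d act W zs als xi /\ x = act g0 xi.

From Stdlib Require Import Reals List Classical Lra Lia ClassicalEpsilon.
Open Scope R_scope.

(* Write [prefix k] for the label product alpha_1 ... alpha_k.  The edge condition
   with (C1), (C3), (C5) puts the closure of W(z_(k+1)) inside Wh(z_k), so the sets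
   prefix k (closure W(z_k)) decrease and, by compactness, meet.  By (C1) and (C2) the
   prefixes are pairwise distinct, so by the convergence property a subsequence of
   their inverses converges to some (a, b).  Pulled back by these inverses, a coded
   point and a point c chosen outside prefix n (W(z_n)) stay eps apart; this forces
   every coded point to be a and makes a conical.  Translating by g0 preserves
   conicality, and a parabolic point p is never conical: along a conical sequence g_n,
   the conjugates of the finitely many generators of Stab(p) are eventually constant
   (otherwise a conjugate of a generator would be loxodromic), so g_0^-1 g_n
   centralises Stab(p), hence lies in Stab(p), which makes g_n p and g_n y converge to
   the same point.  Only (C1)-(C5) and the dynamical part of relative hyperbolicity
   are used. *)

Lemma strictly_incr_ge phi : strictly_incr phi -> forall n, (n <= phi n)%nat.
Proof. intros Hphi n; induction n as [|n IH]; [lia|]. specialize (Hphi n); lia. Qed.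

Lemma strictly_incr_lt phi : strictly_incr phi -> forall m n, (m < n)%nat -> (phi m < phi n)%nat.
Proof.
  intros Hphi m n Hmn; induction Hmn as [|n _ IH]; [apply Hphi|].
  specialize (Hphi n); lia.
Qed.

Lemma strictly_incr_comp phi psi :
  strictly_incr phi -> strictly_incr psi -> strictly_incr (fun n => phi (psi n)).
Proof. intros Hphi Hpsi n. apply strictly_incr_lt, Hpsi. exact Hphi. Qed.

Lemma injective_subseq {T} (f : nat -> T) phi : strictly_incr phi ->
  (forall m n, f m = f n -> m = n) -> forall m n, f (phi m) = f (phi n) -> m = n.
Proof.
  intros Hphi Hf m n Heq. apply Hf in Heq.
  destruct (Nat.lt_trichotomy m n) as [h|[h|h]]; auto;
    apply (strictly_incr_lt phi Hphi) in h; lia.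
Qed.

Lemma infinitely_often_subseq (P : nat -> Prop) :
  (forall N, exists n, (N <= n)%nat /\ P n) ->
  exists phi, strictly_incr phi /\ forall k, P (phi k).
Proof.
  intro HP. destruct (choice _ HP) as [next Hnext].
  exists (nat_rect _ (next O) (fun _ m => next (S m))). split.
  - intro n. simpl. apply Hnext.
  - intros [|k]; apply Hnext.
Qed.

Lemma injective_of_fresh {T} (f : nat -> T) (l : nat -> list T) :
  (forall m n, (m < n)%nat -> In (f m) (l n)) -> (forall n, ~ In (f n) (l n)) ->
  forall m n, f m = f n -> m = n.
Proof.
  intros Hin Hfresh m n Heq.
  destruct (Nat.lt_trichotomy m n) as [h|[h|h]]; auto; exfalso.
  - apply (Hfresh n). rewrite <- Heq. auto.
  - apply (Hfresh m). rewrite Heq. auto.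
Qed.

Lemma eventually_avoiding_injective_subseq {T} (f : nat -> T) :
  (forall t, exists N, forall n, (N <= n)%nat -> f n <> t) ->
  exists phi, strictly_incr phi /\ forall m n, f (phi m) = f (phi n) -> m = n.
Proof.
  intro Havoid.
  assert (Hfresh : forall Nl : nat * list T,
             exists n, (fst Nl <= n)%nat /\ ~ In (f n) (snd Nl)).
  { intros [N l]; simpl. revert N. induction l as [|t l IH]; intro N.
    - exists N. auto.
    - destruct (Havoid t) as [N1 H1]. destruct (IH (N + N1)%nat) as [n [Hn Hnl]].
      exists n. split; [lia|]. intros [Ht|Ht]; [|auto]. apply (H1 n); auto; lia. }
  destruct (choice _ Hfresh) as [next Hnext].
  (* [state k] is the pair (phi k, [f (phi j) | j < k]) *)
  set (state := nat_rect (fun _ => (nat * list T)%type) (next (O, nil), nil)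
                  (fun _ s => (next (S (fst s), f (fst s) :: snd s), f (fst s) :: snd s))).
  exists (fun k => fst (state k)). split.
  - intro k. simpl. apply (Hnext (S (fst (state k)), _)).
  - apply (injective_of_fresh (fun k => f (fst (state k))) (fun k => snd (state k))).
    + intros m n Hmn. induction Hmn as [|n _ IH]; simpl; auto.
    + intros [|k]; [apply (Hnext (O, nil))|apply (Hnext (S (fst (state k)), _))].
Qed.

Lemma constant_or_injective_subseq {T} (f : nat -> T) :
  exists phi, strictly_incr phi /\
    ((exists t, forall k, f (phi k) = t) \/ forall m n, f (phi m) = f (phi n) -> m = n).
Proof.
  destruct (classic (exists t, forall N, exists n, (N <= n)%nat /\ f n = t))
    as [[t Ht]|Hno].
  - destruct (infinitely_often_subseq _ Ht) as [phi [Hphi Hc]]. eauto.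
  - destruct (eventually_avoiding_injective_subseq f) as [phi [Hphi Hi]]; eauto.
    intro t. apply NNPP. intro Hc. apply Hno. exists t. intro N.
    apply NNPP. intro Hm. apply Hc. exists N. intros n Hn Heq. apply Hm. eauto.
Qed.

Lemma not_finite_fresh {T} (P : T -> Prop) :
  ~ finite_set P -> forall l, exists x, P x /\ ~ In x l.
Proof.
  intros HP l. apply NNPP. intro Hc. apply HP. exists l. intros x Px.
  apply NNPP. intro. apply Hc. eauto.
Qed.

Lemma infinite_injective_seq {T} (P : T -> Prop) : ~ finite_set P ->
  exists f : nat -> T, (forall n, P (f n)) /\ forall m n, f m = f n -> m = n.
Proof.
  intro HP. destruct (choice _ (not_finite_fresh P HP)) as [fresh Hfresh].
  set (prev := nat_rect (fun _ => list T) nil (fun _ l => fresh l :: l)).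
  exists (fun k => fresh (prev k)). split; [intro; apply Hfresh|].
  apply (injective_of_fresh _ prev).
  - intros m n Hmn. induction Hmn as [|n _ IH]; simpl; auto.
  - intro n. apply Hfresh.
Qed.

Section BoundaryDynamics.

Variables (G : Type) (mul : G -> G -> G) (inv : G -> G) (e : G).
Hypothesis HG : is_group mul inv e.

Lemma mulgA a b c : mul a (mul b c) = mul (mul a b) c. Proof. apply HG. Qed.
Lemma mul1g a : mul e a = a. Proof. apply HG. Qed.
Lemma mulg1 a : mul a e = a. Proof. apply HG. Qed.
Lemma mulVg a : mul (inv a) a = e. Proof. apply HG. Qed.
Lemma mulgV a : mul a (inv a) = e. Proof. apply HG. Qed.

Lemma mulg_cancel_l a b c : mul a b = mul a c -> b = c.
Proof.
  intro Heq. rewrite <- (mul1g b), <- (mul1g c), <- (mulVg a), <- !mulgA, Heq. reflexivity.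
Qed.

Lemma invg_inj a b : inv a = inv b -> a = b.
Proof. intro Heq. apply (mulg_cancel_l (inv a)). rewrite mulVg, Heq, mulVg. reflexivity. Qed.

Definition conjg g h := mul g (mul h (inv g)).

Lemma conjg1 g : conjg g e = e.
Proof. unfold conjg. rewrite mul1g, mulgV. reflexivity. Qed.

Lemma conjgM g a b : conjg g (mul a b) = mul (conjg g a) (conjg g b).
Proof.
  unfold conjg. rewrite !mulgA, <- (mulgA (mul g a) (inv g) g), mulVg, mulg1. reflexivity.
Qed.

Lemma gpowD s m n : gpow mul e s (m + n) = mul (gpow mul e s m) (gpow mul e s n).
Proof. induction m as [|m IH]; simpl; [rewrite mul1g|rewrite IH, mulgA]; reflexivity. Qed.

Lemma gpow_conjg g h n : gpow mul e (conjg g h) n = conjg g (gpow mul e h n).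
Proof.
  induction n as [|n IH]; simpl; [now rewrite conjg1|]. rewrite IH, conjgM. reflexivity.
Qed.

Lemma gpow_inj s : (forall n, (1 <= n)%nat -> gpow mul e s n <> e) ->
  forall m n, gpow mul e s m = gpow mul e s n -> m = n.
Proof.
  intro Hord.
  assert (Hlt : forall m n, (m < n)%nat -> gpow mul e s m <> gpow mul e s n).
  { intros m n Hmn Heq. apply (Hord (n - m)%nat); [lia|].
    replace n with (m + (n - m))%nat in Heq by lia. rewrite gpowD in Heq.
    apply (mulg_cancel_l (gpow mul e s m)). rewrite mulg1. auto. }
  intros m n Heq. destruct (Nat.lt_trichotomy m n) as [h|[h|h]]; auto; exfalso.
  - exact (Hlt m n h Heq).
  - exact (Hlt n m h (eq_sym Heq)).
Qed.

Variables (B : Type) (d : B -> B -> R).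
Hypothesis Hmet : is_metric d.

Lemma dist_ge0 x y : 0 <= d x y. Proof. apply Hmet. Qed.
Lemma dist_xx x : d x x = 0. Proof. apply Hmet. reflexivity. Qed.
Lemma dist_sym x y : d x y = d y x. Proof. apply Hmet. Qed.
Lemma dist_tri x y z : d x z <= d x y + d y z. Proof. apply Hmet. Qed.

Lemma dist_gt0 x y : x <> y -> 0 < d x y.
Proof.
  intro Hxy. destruct (Rle_lt_or_eq_dec 0 (d x y) (dist_ge0 x y)) as [h|h]; auto.
  exfalso. apply Hxy, Hmet. auto.
Qed.

Lemma converges_subseq u x phi : strictly_incr phi ->
  seq_converges d u x -> seq_converges d (fun n => u (phi n)) x.
Proof.
  intros Hphi Hu eps Heps. destruct (Hu eps Heps) as [N HN]. exists N. intros n Hn.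
  apply HN. pose proof (strictly_incr_ge phi Hphi n). lia.
Qed.

Lemma converges_ext (u v : nat -> B) x :
  (forall n, u n = v n) -> seq_converges d u x -> seq_converges d v x.
Proof.
  intros Huv Hu eps Heps. destruct (Hu eps Heps) as [N HN].
  exists N. intros. rewrite <- Huv. auto.
Qed.

Lemma converges_const x : seq_converges d (fun _ => x) x.
Proof. intros eps Heps. exists O. intros. rewrite dist_xx. auto. Qed.

Lemma converges_not_far u v x eps : 0 < eps ->
  seq_converges d u x -> seq_converges d v x ->
  forall N, exists n, (N <= n)%nat /\ d (u n) (v n) < eps.
Proof.
  intros Heps Hu Hv N.
  destruct (Hu (eps / 2)) as [N1 HN1]; [lra|]. destruct (Hv (eps / 2)) as [N2 HN2]; [lra|].
  set (n := (N + N1 + N2)%nat). exists n. split; [unfold n; lia|].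
  specialize (HN1 n ltac:(unfold n; lia)). specialize (HN2 n ltac:(unfold n; lia)).
  pose proof (dist_tri (u n) x (v n)) as Htri. rewrite (dist_sym x) in Htri. lra.
Qed.

Lemma dist_limit_le (u : nat -> B) l c r : seq_converges d u l ->
  (exists N, forall n, (N <= n)%nat -> d c (u n) < r) -> d c l <= r.
Proof.
  intros Hu [N HN]. apply Rnot_lt_le. intro Hc.
  destruct (Hu (d c l - r)) as [N2 HN2]; [lra|].
  specialize (HN (N + N2)%nat ltac:(lia)). specialize (HN2 (N + N2)%nat ltac:(lia)).
  pose proof (dist_tri c (u (N + N2)%nat) l). lra.
Qed.

Lemma converges_unique u x y : seq_converges d u x -> seq_converges d u y -> x = y.
Proof.
  intros Hx Hy. apply NNPP. intro Hxy. pose proof (dist_gt0 _ _ Hxy).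
  assert (Hle : d x y <= d x y / 2).
  { apply (dist_limit_le u); auto. destruct (Hx (d x y / 2)) as [N HN]; [lra|].
    exists N. intros n Hn. rewrite dist_sym. auto. }
  lra.
Qed.

Lemma converges_const_eq x y : seq_converges d (fun _ => x) y -> x = y.
Proof. exact (converges_unique _ _ _ (converges_const x)). Qed.

Lemma m_closure_self (A : B -> Prop) x : A x -> m_closure d A x.
Proof. intros Hx r Hr. exists x. rewrite dist_xx. auto. Qed.

Lemma continuous_converges f u x : continuous_map d f ->
  seq_converges d u x -> seq_converges d (fun n => f (u n)) (f x).
Proof.
  intros Hf Hu eps Heps. destruct (Hf x eps Heps) as [del [Hdel Hfx]].
  destruct (Hu del Hdel) as [N HN]. exists N. intros n Hn.
  rewrite dist_sym. apply Hfx. rewrite dist_sym. auto.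
Qed.

Hypothesis Hcpt : m_compact_set d (fun _ => True).

Lemma seq_closed_compact (C : B -> Prop) :
  (forall u x, (forall n, C (u n)) -> seq_converges d u x -> C x) -> m_compact_set d C.
Proof.
  intros Hclosed u Hu. destruct (Hcpt u (fun _ => I)) as [phi [Hphi [x [_ Hx]]]].
  exists phi. split; auto. exists x. split; auto. apply (Hclosed (fun n => u (phi n))); auto.
Qed.

Lemma closed_ball_compact c r : m_compact_set d (fun y => d c y <= r).
Proof.
  apply seq_closed_compact. intros u x Hu Hx. apply Rnot_lt_le. intro Hlt.
  destruct (Hx (d c x - r)) as [N HN]; [lra|]. specialize (HN N (le_n _)).
  pose proof (Hu N). pose proof (dist_tri c (u N) x). lra.
Qed.

Lemma closed_ball_add_point_compact c r w :
  m_compact_set d (fun y => d c y <= r \/ y = w).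
Proof.
  apply seq_closed_compact. intros u x Hu Hx.
  destruct (classic (x = w)) as [Hw|Hw]; [right; auto|left].
  apply Rnot_lt_le. intro Hlt. pose proof (dist_gt0 _ _ Hw).
  destruct (Hx (Rmin (d c x - r) (d x w))) as [N HN]; [apply Rmin_pos; lra|].
  specialize (HN N (le_n _)). destruct (Hu N) as [Hin|Huw].
  - pose proof (dist_tri c (u N) x). pose proof (Rmin_l (d c x - r) (d x w)). lra.
  - rewrite Huw, dist_sym in HN. pose proof (Rmin_r (d c x - r) (d x w)). lra.
Qed.

Lemma closed_ball_compl_compact c r : m_compact_set d (fun y => r <= d c y).
Proof.
  apply seq_closed_compact. intros u x Hu Hx. apply Rnot_lt_le. intro Hlt.
  destruct (Hx (r - d c x)) as [N HN]; [lra|]. specialize (HN N (le_n _)).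
  pose proof (Hu N). pose proof (dist_tri c x (u N)) as Htri.
  rewrite (dist_sym x) in Htri. lra.
Qed.

Lemma image_compact (C : B -> Prop) f : continuous_map d f ->
  m_compact_set d C -> m_compact_set d (fun v => exists k, C k /\ v = f k).
Proof.
  intros Hf HC u Hu. destruct (choice (fun n k => C k /\ u n = f k) Hu) as [k Hk].
  destruct (HC k (fun n => proj1 (Hk n))) as [phi [Hphi [x [Hx Hconv]]]].
  exists phi. split; auto. exists (f x). split; [eauto|].
  apply (converges_ext (fun n => f (k (phi n)))); [intro; symmetry; apply Hk|].
  apply continuous_converges; auto.
Qed.

(** * Convergence group actions *)

Variable act : G -> B -> B.
Hypothesis Hact : is_action mul e act.
Hypothesis Hcont : forall g, continuous_map d (act g).

Lemma act1 x : act e x = x. Proof. apply Hact. Qed.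
Lemma actM g h x : act (mul g h) x = act g (act h x). Proof. apply Hact. Qed.
Lemma actVK g x : act (inv g) (act g x) = x.
Proof. rewrite <- actM, mulVg. apply act1. Qed.
Lemma actKV g x : act g (act (inv g) x) = x.
Proof. rewrite <- actM, mulgV. apply act1. Qed.
Lemma act_inj g x y : act g x = act g y -> x = y.
Proof. intro Heq. rewrite <- (actVK g x), <- (actVK g y), Heq. reflexivity. Qed.

Lemma act_conjg g h y : act (conjg g h) (act g y) = act g (act h y).
Proof. unfold conjg. rewrite !actM, actVK. reflexivity. Qed.

Lemma act_gpowS s k y : act (gpow mul e s (S k)) y = act s (act (gpow mul e s k) y).
Proof. apply actM. Qed.

Lemma act_gpow_comm s k y : act (gpow mul e s k) (act s y) = act s (act (gpow mul e s k) y).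
Proof. induction k as [|k IH]; [simpl; rewrite !act1|rewrite !act_gpowS, IH]; reflexivity. Qed.

Lemma act_gpowV_comm s k y :
  act (inv (gpow mul e s k)) (act s y) = act s (act (inv (gpow mul e s k)) y).
Proof. apply (act_inj (gpow mul e s k)). rewrite act_gpow_comm, !actKV. reflexivity. Qed.

Lemma act_gpow_fix s k y : act s y = y -> act (gpow mul e s k) y = y.
Proof. intro Hy. induction k as [|k IH]; [apply act1|rewrite act_gpowS, IH; auto]. Qed.

Lemma luc_subseq (g : nat -> G) a b phi : strictly_incr phi ->
  loc_unif_conv d act g a b -> loc_unif_conv d act (fun n => g (phi n)) a b.
Proof.
  intros Hphi Hg C HC HCa eps Heps. destruct (Hg C HC HCa eps Heps) as [N HN].
  exists N. intros n Hn x Hx. apply HN; auto. pose proof (strictly_incr_ge phi Hphi n). lia.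
Qed.

Lemma luc_converges (g : nat -> G) a b u y : loc_unif_conv d act g a b -> y <> a ->
  seq_converges d u y -> seq_converges d (fun n => act (g n) (u n)) b.
Proof.
  intros Hg Hya Hu eps Heps. pose proof (dist_gt0 _ _ Hya).
  destruct (Hg _ (closed_ball_compact y (d y a / 2))) with (eps := eps) as [N1 HN1]; auto.
  { intros x Hx ->. lra. }
  destruct (Hu (d y a / 2)) as [N2 HN2]; [lra|].
  exists (N1 + N2)%nat. intros n Hn. apply HN1; [lia|].
  rewrite dist_sym. left. apply HN2. lia.
Qed.

Lemma luc_const (g : nat -> G) a b y : loc_unif_conv d act g a b -> y <> a ->
  seq_converges d (fun n => act (g n) y) b.
Proof. intros Hg Hya. apply (luc_converges g a b (fun _ => y) y Hg Hya (converges_const y)). Qed.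

(* Otherwise [act (inv (g n)) w] stays in the compact set [{y | del <= d a y}],
   which [g n] maps close to [b], whereas it maps it back to [w]. *)
Lemma luc_inv_converges (g : nat -> G) a b w : loc_unif_conv d act g a b -> w <> b ->
  seq_converges d (fun n => act (inv (g n)) w) a.
Proof.
  intros Hg Hwb del Hdel. pose proof (dist_gt0 _ _ Hwb).
  destruct (Hg _ (closed_ball_compl_compact a del)) with (eps := d w b) as [N HN]; auto.
  { intros x Hx ->. rewrite dist_xx in Hx. lra. }
  exists N. intros n Hn. apply Rnot_le_lt. intro Hfar.
  specialize (HN n Hn (act (inv (g n)) w)). rewrite actKV in HN.
  rewrite dist_sym in Hfar. specialize (HN Hfar). lra.
Qed.

Hypothesis Hconv : convergence_action d act.
Hypothesis HBinf : ~ finite_set (fun _ : B => True).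

Lemma exists_not_in (l : list B) : exists y, ~ In y l.
Proof. destruct (not_finite_fresh _ HBinf l) as [y [_ Hy]]. eauto. Qed.

Section PowerDynamics.

Variables (s : G) (phi : nat -> nat) (a b : B).
Hypothesis Hpow : loc_unif_conv d act (fun k => gpow mul e s (phi k)) a b.

Lemma gpow_luc_fix_attracting : act s b = b.
Proof.
  destruct (exists_not_in (a :: act (inv s) a :: nil)) as [y Hy].
  assert (Hya : y <> a) by (intro; apply Hy; simpl; auto).
  assert (Hsya : act s y <> a).
  { intro Hc. apply Hy. simpl. right. left. rewrite <- Hc, actVK. reflexivity. }
  apply (converges_unique (fun k => act (gpow mul e s (phi k)) (act s y))).
  - apply (converges_ext (fun k => act s (act (gpow mul e s (phi k)) y))).
    { intro. symmetry. apply act_gpow_comm. }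
    apply continuous_converges; auto. apply (luc_const _ a); auto.
  - apply (luc_const _ a); auto.
Qed.

Lemma gpow_luc_fix_repelling : act s a = a.
Proof.
  destruct (exists_not_in (b :: nil)) as [y Hy].
  assert (Hyb : y <> b) by (intro; apply Hy; simpl; auto).
  assert (Hsyb : act s y <> b).
  { rewrite <- gpow_luc_fix_attracting. intro Hc. apply act_inj in Hc. auto. }
  apply (converges_unique (fun k => act s (act (inv (gpow mul e s (phi k))) y))).
  - apply continuous_converges; auto. apply (luc_inv_converges _ _ b); auto.
  - apply (converges_ext (fun k => act (inv (gpow mul e s (phi k))) (act s y))).
    { intro. apply act_gpowV_comm. }
    apply (luc_inv_converges _ _ b); auto.
Qed.

Lemma gpow_luc_fixed_points y : act s y = y -> y = a \/ y = b.
Proof.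
  intro Hy. destruct (classic (y = a)) as [|Hya]; [auto|right].
  apply converges_const_eq.
  apply (converges_ext (fun k => act (gpow mul e s (phi k)) y)).
  { intro. apply act_gpow_fix. auto. }
  apply (luc_const _ a); auto.
Qed.

End PowerDynamics.

Lemma gpow_contracts s c r r' w : r' < r ->
  (forall y, d c y <= r \/ y = w -> d c (act s y) < r') ->
  forall k y, (1 <= k)%nat -> d c y <= r \/ y = w -> d c (act (gpow mul e s k) y) < r'.
Proof.
  intros Hr Hs [|k] y Hk Hy; [lia|]. clear Hk. induction k as [|k IH].
  - rewrite act_gpowS. simpl. rewrite act1. auto.
  - rewrite act_gpowS. apply Hs. left. lra.
Qed.

(* The powers of [s] converge to some [(a, b)] with [b] in the small ball; [a = b]
   is impossible, as inverse powers would bring [u] into the big ball, which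
   the powers map back into the small one. *)
Lemma contracting_loxodromic s c r r' w u :
  0 < r' -> r' < r -> r' < d c w -> r < d c u ->
  (forall y, d c y <= r \/ y = w -> d c (act s y) < r') -> loxodromic mul e act s.
Proof.
  intros Hr' Hr Hw Hu Hs. pose proof (gpow_contracts s c r r' w Hr Hs) as Hpow.
  assert (Hord : forall n, (1 <= n)%nat -> gpow mul e s n <> e).
  { intros n Hn Heq. specialize (Hpow n w Hn (or_intror eq_refl)).
    rewrite Heq, act1 in Hpow. lra. }
  destruct (Hconv _ (gpow_inj s Hord)) as [phi [Hphi [a [b Hl]]]].
  assert (Hcb : d c b <= r').
  { assert (Hv : exists v, (d c v <= r \/ v = w) /\ v <> a).
    { destruct (classic (c = a)) as [<-|Hca].
      - exists w. split; [right; reflexivity|]. intros ->. rewrite dist_xx in Hw. lra.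
      - exists c. rewrite dist_xx. split; [left; lra|auto]. }
    destruct Hv as [v [Hv Hva]].
    apply (dist_limit_le (fun k => act (gpow mul e s (phi k)) v)).
    - apply (luc_const _ a); auto.
    - exists 1%nat. intros n Hn. apply Hpow; auto.
      pose proof (strictly_incr_ge phi Hphi n). lia. }
  assert (Hab : a <> b).
  { intros <-. assert (Hua : u <> a) by (intros ->; lra).
    destruct (luc_inv_converges _ _ _ u Hl Hua (r - r')) as [K HK]; [lra|].
    set (y := act (inv (gpow mul e s (phi (S K)))) u).
    assert (Hy : d c y <= r).
    { specialize (HK (S K) (le_S _ _ (le_n _))). pose proof (dist_tri c a y) as Htri.
      rewrite (dist_sym a) in Htri. fold y in HK. lra. }
    specialize (Hpow (phi (S K)) y ltac:(pose proof (strictly_incr_ge phi Hphi (S K)); lia)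
                  (or_introl Hy)).
    unfold y in Hpow. rewrite actKV in Hpow. lra. }
  split; [exact Hord|]. exists a, b.
  split; [|split; [|split]]; eauto using gpow_luc_fix_repelling, gpow_luc_fix_attracting.
  intros y Hy. apply (gpow_luc_fixed_points s phi); auto.
Qed.

Lemma north_south_loxodromic (g : nat -> G) a b :
  loc_unif_conv d act g a b -> a <> b -> exists n, loxodromic mul e act (g n).
Proof.
  intros Hg Hab. destruct (exists_not_in (a :: b :: nil)) as [w Hw].
  assert (Hwa : w <> a) by (intro; apply Hw; simpl; auto).
  assert (Hwb : w <> b) by (intro; apply Hw; simpl; auto).
  pose proof (dist_gt0 _ _ Hab) as Hba. pose proof (dist_gt0 _ _ Hwb) as Hbw.
  rewrite dist_sym in Hba, Hbw.
  set (r := d b a / 2). set (r' := Rmin (r / 2) (d b w / 2)).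
  assert (Hr'r : r' <= r / 2) by apply Rmin_l.
  assert (Hr'w : r' <= d b w / 2) by apply Rmin_r.
  assert (Hr' : 0 < r') by (apply Rmin_pos; unfold r; lra).
  destruct (Hg _ (closed_ball_add_point_compact b r w)) with (eps := r') as [N HN]; auto.
  { intros x [Hx| ->] ->; [unfold r in Hx; lra|auto]. }
  exists N. apply (contracting_loxodromic (g N) b r r' w a); try (unfold r in *; lra).
  intros y Hy. rewrite dist_sym. apply HN; auto.
Qed.

Lemma loxodromic_conjg g h :
  loxodromic mul e act (conjg g h) -> loxodromic mul e act h.
Proof.
  intros [Hord [a [b [Hab [Ha [Hb Hfix]]]]]].
  assert (Hconj : forall y, act (conjg g h) y = act g (act h (act (inv g) y))).
  { intro. unfold conjg. rewrite !actM. reflexivity. }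
  split.
  - intros n Hn Heq. apply (Hord n Hn). rewrite gpow_conjg, Heq. apply conjg1.
  - exists (act (inv g) a), (act (inv g) b). split; [intro Hc; apply act_inj in Hc; auto|].
    split; [|split].
    + apply (act_inj g). rewrite actKV, <- Hconj. auto.
    + apply (act_inj g). rewrite actKV, <- Hconj. auto.
    + intros y Hy. destruct (Hfix (act g y)) as [<-| <-];
        [rewrite Hconj, actVK, Hy; reflexivity| |]; rewrite actVK; auto.
Qed.

Lemma conical_limit_point_act x h :
  conical_limit_point d act x -> conical_limit_point d act (act h x).
Proof.
  intros [g [a [b [Hab [Hga Hgb]]]]]. exists (fun n => mul (g n) (inv h)), a, b.
  split; [|split]; auto.
  - apply (converges_ext (fun n => act (g n) x)); auto. intro. rewrite actM, actVK. auto.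
  - intros C HC HCx eps Heps.
    destruct (Hgb _ (image_compact C (act (inv h)) (Hcont _) HC)) with (eps := eps)
      as [N HN]; auto.
    { intros v [k [Hk ->]] Hkx. apply (HCx k Hk). rewrite <- Hkx, actKV. auto. }
    exists N. intros n Hn y Hy. rewrite actM. apply HN; eauto.
Qed.

(** * Parabolic points *)

Section ParabolicPoints.

Variable p : B.
Hypothesis Hpar : parabolic_point mul e act p.

Lemma stab_luc_parabolic (g : nat -> G) a b : (forall n, stabilizer act p (g n)) ->
  loc_unif_conv d act g a b -> a = p /\ b = p.
Proof.
  intros Hg Hl.
  assert (Hab : a = b).
  { apply NNPP. intro Hab. destruct (north_south_loxodromic g a b Hl Hab) as [n Hn].
    exact (proj2 Hpar (g n) (Hg n) Hn). }
  subst b. destruct (classic (a = p)) as [|Hpa]; [auto|].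
  exfalso. apply Hpa. symmetry. apply converges_const_eq.
  apply (converges_ext (fun n => act (g n) p)); [intro; apply Hg|].
  apply (luc_const _ a); auto.
Qed.

Lemma stab_fixed_point_eq y : (forall h, stabilizer act p h -> act h y = y) -> y = p.
Proof.
  intro Hy. destruct (infinite_injective_seq _ (proj1 Hpar)) as [f [Hf Hinj]].
  destruct (Hconv f Hinj) as [phi [Hphi [a [b Hl]]]].
  destruct (stab_luc_parabolic (fun n => f (phi n)) a b (fun n => Hf _) Hl) as [-> ->].
  apply NNPP. intro Hyp. apply Hyp, converges_const_eq.
  apply (converges_ext (fun n => act (f (phi n)) y)); [intro; apply Hy, Hf|].
  apply (luc_const _ p); auto.
Qed.

(* A conjugate [conjg (g n) h] of an element of the stabilizer moves [g n p] and [g n y]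
   exactly as [h] moves [p] and [y], which pins down both of its limit points. *)
Lemma conjg_luc_distinct (g : nat -> G) a b h al be : a <> b ->
  seq_converges d (fun n => act (g n) p) a -> loc_unif_conv d act g p b ->
  stabilizer act p h -> loc_unif_conv d act (fun n => conjg (g n) h) al be -> al <> be.
Proof.
  intros Hab Hga Hgb Hh Hl <-.
  destruct (classic (al = b)) as [->|Hb].
  - apply Hab. apply (converges_unique (fun n => act (conjg (g n) h) (act (g n) p))).
    + apply (converges_ext (fun n => act (g n) p)); auto.
      intro. rewrite act_conjg, Hh. reflexivity.
    + apply (luc_converges _ b b _ a); auto.
  - apply Hb. destruct (exists_not_in (p :: nil)) as [y Hy].
    assert (Hyp : y <> p) by (intro; apply Hy; simpl; auto).
    assert (Hhy : act h y <> p).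
    { rewrite <- Hh. intro Hc. apply act_inj in Hc. auto. }
    apply (converges_unique (fun n => act (conjg (g n) h) (act (g n) y))).
    + apply (luc_converges _ al al _ b); auto. apply (luc_const _ p); auto.
    + apply (converges_ext (fun n => act (g n) (act h y))).
      { intro. symmetry. apply act_conjg. }
      apply (luc_const _ p); auto.
Qed.

Lemma conjg_recurrent (g : nat -> G) a b h : a <> b ->
  seq_converges d (fun n => act (g n) p) a -> loc_unif_conv d act g p b ->
  stabilizer act p h ->
  exists phi, strictly_incr phi /\ exists t, forall k, conjg (g (phi k)) h = t.
Proof.
  intros Hab Hga Hgb Hh.
  destruct (constant_or_injective_subseq (fun n => conjg (g n) h))
    as [phi [Hphi [Hconst|Hinj]]]; [eauto|exfalso].
  destruct (Hconv _ Hinj) as [psi [Hpsi [al [be Hl]]]].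
  set (chi := fun n => phi (psi n)).
  assert (Hchi : strictly_incr chi) by exact (strictly_incr_comp phi psi Hphi Hpsi).
  assert (Hdist : al <> be).
  { apply (conjg_luc_distinct (fun n => g (chi n)) a b h); auto.
    - apply (converges_subseq (fun n => act (g n) p)); auto.
    - apply luc_subseq; auto. }
  destruct (north_south_loxodromic _ _ _ Hl Hdist) as [n Hn].
  exact (proj2 Hpar h Hh (loxodromic_conjg _ _ Hn)).
Qed.

Lemma conjg_eventually_const (g : nat -> G) a b (l : list G) : a <> b ->
  seq_converges d (fun n => act (g n) p) a -> loc_unif_conv d act g p b ->
  exists psi, strictly_incr psi /\ forall h, In h l -> stabilizer act p h ->
    forall n, conjg (g (psi n)) h = conjg (g (psi O)) h.
Proof.
  intros Hab Hga Hgb. induction l as [|h l IH].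
  - exists (fun n => n). split; [intro; lia|]. intros h [].
  - destruct IH as [psi [Hpsi Hl]].
    destruct (classic (stabilizer act p h)) as [Hh|Hh].
    + destruct (conjg_recurrent (fun n => g (psi n)) a b h) as [chi [Hchi [t Ht]]]; auto.
      { apply (converges_subseq (fun n => act (g n) p)); auto. }
      { apply luc_subseq; auto. }
      exists (fun n => psi (chi n)). split; [apply strictly_incr_comp; auto|].
      intros h' [<-|Hh'] Hst n; [rewrite !Ht; reflexivity|].
      rewrite (Hl h' Hh' Hst), (Hl h' Hh' Hst (chi O)). reflexivity.
    + exists psi. split; auto. intros h' [<-|Hh'] Hst; [contradiction|auto].
Qed.

Lemma luc_injective_subseq (g : nat -> G) b : loc_unif_conv d act g p b ->
  exists phi, strictly_incr phi /\ forall m n, g (phi m) = g (phi n) -> m = n.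
Proof.
  intro Hgb.
  destruct (constant_or_injective_subseq g) as [phi [Hphi [[t Ht]|Hinj]]]; [|eauto].
  exfalso.
  assert (Hval : forall y, y <> p -> act t y = b).
  { intros y Hy. apply converges_const_eq.
    apply (converges_ext (fun n => act (g (phi n)) y)); [intro; rewrite Ht; auto|].
    apply (luc_const _ p); auto. apply luc_subseq; auto. }
  destruct (exists_not_in (p :: nil)) as [y1 Hy1].
  destruct (exists_not_in (p :: y1 :: nil)) as [y2 Hy2].
  apply Hy2. simpl. right. left. apply (act_inj t).
  rewrite !Hval; auto; intro; [apply Hy2|apply Hy1]; simpl; auto.
Qed.

Variable gens : list G.
Hypothesis Hgen : forall h, stabilizer act p h ->
  exists w, Forall (fun s => In s gens /\ stabilizer act p s) w /\ h = word_prod mul e w.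

(* As conjugation by [g n] and by [g 0] agree on the stabilizer,
   [inv (g 0) * g n] centralises it, hence fixes [p]; so [g n p = g 0 p = a],
   while [g n y] also tends to [g 0 p]. *)
Lemma no_centralising_conical_seq (g : nat -> G) a b : a <> b ->
  (forall m n, g m = g n -> m = n) ->
  seq_converges d (fun n => act (g n) p) a -> loc_unif_conv d act g p b ->
  (forall h, stabilizer act p h -> forall n, conjg (g n) h = conjg (g O) h) -> False.
Proof.
  intros Hab Hinj Hga Hgb Hcent.
  set (c := fun n => mul (inv (g O)) (g n)).
  assert (Hc : forall n y, act (g n) y = act (g O) (act (c n) y)).
  { intros. unfold c. rewrite !actM, actKV. reflexivity. }
  assert (Hcs : forall n, stabilizer act p (c n)).
  { intro n. apply stab_fixed_point_eq. intros h Hh.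
    apply (act_inj (g O)). rewrite <- (act_conjg (g O) h), <- !Hc, <- (Hcent h Hh n).
    rewrite act_conjg, Hh. reflexivity. }
  assert (Hcinj : forall m n, c m = c n -> m = n).
  { intros m n Hmn. apply Hinj, (mulg_cancel_l (inv (g O))). auto. }
  destruct (Hconv c Hcinj) as [phi [Hphi [al [be Hl]]]].
  destruct (stab_luc_parabolic _ al be (fun n => Hcs _) Hl) as [-> ->].
  assert (Ha : a = act (g O) p).
  { symmetry. apply converges_const_eq. apply (converges_ext (fun n => act (g n) p)); auto.
    intro n. rewrite Hc, (Hcs n). reflexivity. }
  destruct (exists_not_in (p :: nil)) as [y Hy].
  assert (Hyp : y <> p) by (intro; apply Hy; simpl; auto).
  apply Hab. rewrite Ha. apply (converges_unique (fun n => act (g (phi n)) y)).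
  - apply (converges_ext (fun n => act (g O) (act (c (phi n)) y))); [intro; symmetry; apply Hc|].
    apply continuous_converges; auto. apply (luc_const _ p); auto.
  - apply (luc_const _ p); auto. apply luc_subseq; auto.
Qed.

Theorem parabolic_not_conical : ~ conical_limit_point d act p.
Proof.
  intros [g [a [b [Hab [Hga Hgb]]]]].
  destruct (luc_injective_subseq g b Hgb) as [phi [Hphi Hinj]].
  destruct (conjg_eventually_const (fun n => g (phi n)) a b gens Hab) as [psi [Hpsi Hconst]].
  { apply (converges_subseq (fun n => act (g n) p)); auto. }
  { apply luc_subseq; auto. }
  apply (no_centralising_conical_seq (fun n => g (phi (psi n))) a b Hab).
  - apply (injective_subseq (fun n => g (phi n))); auto.
  - apply (converges_subseq (fun n => act (g n) p)); auto. apply strictly_incr_comp; auto.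
  - apply luc_subseq; [apply strictly_incr_comp|]; auto.
  - intros h Hh n. destruct (Hgen h Hh) as [w [Hw ->]]. clear Hh.
    induction Hw as [|s w [Hs_gen Hs] _ IH]; simpl; [rewrite !conjg1; reflexivity|].
    rewrite !conjgM, IH, (Hconst s); auto.
Qed.

End ParabolicPoints.

(** * Conical codings *)

Section Coding.

Variable eps : R.
Hypothesis Heps : 0 < eps.
Variables (Z : list B) (V W Vh Wh : B -> B -> Prop) (L : B -> G -> Prop).
Hypothesis HC1 : forall z, In z Z -> diam_lt d (W z) eps.
Hypothesis HC2 : forall z, In z Z -> diam_gt d (Wh z) (4 * eps).
Hypothesis HC3 : forall z, In z Z -> forall x, closed_nbhd d (2 * eps) (Vh z) x -> Wh z x.
Hypothesis HC4 : forall z, In z Z -> forall x,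
  W z x <-> (x = z \/ exists a y, L z a /\ Wh z y /\ x = act a y).
Hypothesis HC5 : forall z, In z Z -> forall x, m_closure d (V z) x -> W z x.
Variables (zs : nat -> B) (als : nat -> G).
Hypothesis Hpath : edge_path Z Vh V L zs als.

Let prefix k := label_prod mul e als k.
Let cylinder k xi := exists y, m_closure d (W (zs k)) y /\ xi = act (prefix k) y.

Lemma zs_in k : In (zs k) Z. Proof. apply (Hpath k). Qed.

Lemma act_prefixS k y : act (prefix (S k)) y = act (prefix k) (act (als k) y).
Proof. apply actM. Qed.

Lemma W_act_label k y : Wh (zs k) y -> W (zs k) (act (als k) y).
Proof.
  intro Hy. apply (HC4 _ (zs_in k)). right. exists (als k), y.
  split; [apply (Hpath k)|auto].
Qed.

(* The edge from [zs k] to [zs (S k)] provides a point of [Vh (zs k)] inside the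
   [eps]-small set [W (zs (S k))]; (C3) then puts an [eps]-neighbourhood of
   the closure of [W (zs (S k))] inside [Wh (zs k)]. *)
Lemma closure_W_far_from_compl_Wh k u v :
  m_closure d (W (zs (S k))) u -> ~ Wh (zs k) v -> eps < d u v.
Proof.
  intros Hu Hv. destruct (Hpath k) as [_ [_ [_ [x0 [Hx0h Hx0]]]]].
  assert (Wx0 : W (zs (S k)) x0) by (apply HC5, m_closure_self; auto using zs_in).
  destruct (HC1 _ (zs_in (S k))) as [r [Hr Hdiam]].
  assert (Hux : d u x0 <= r).
  { apply Rnot_lt_le. intro Hc. destruct (Hu (d u x0 - r)) as [y [Hy Hdy]]; [lra|].
    pose proof (Hdiam y x0 Hy Wx0). pose proof (dist_tri u y x0). lra. }
  apply Rnot_le_lt. intro Hc. apply Hv, HC3; [apply zs_in|].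
  intros s Hs. exists x0. split; auto.
  pose proof (dist_tri v u x0) as Htri. rewrite (dist_sym v u) in Htri. lra.
Qed.

Lemma closure_W_sub_Wh k u : m_closure d (W (zs (S k))) u -> Wh (zs k) u.
Proof.
  intro Hu. apply NNPP. intro Hc.
  pose proof (closure_W_far_from_compl_Wh k u u Hu Hc) as Hfar. rewrite dist_xx in Hfar. lra.
Qed.

Lemma Wh_pullback n j y : Wh (zs (n + j)) y ->
  exists w, W (zs n) w /\ act (prefix (S (n + j))) y = act (prefix n) w.
Proof.
  revert y. induction j as [|j IH]; intros y Hy.
  - rewrite Nat.add_0_r in *. exists (act (als n) y).
    split; [apply W_act_label; auto|apply act_prefixS].
  - replace (n + S j)%nat with (S (n + j)) in * by lia.
    destruct (IH (act (als (S (n + j))) y)) as [w [Hw Hprefix]].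
    { apply closure_W_sub_Wh, m_closure_self, W_act_label. auto. }
    exists w. split; auto. rewrite act_prefixS. auto.
Qed.

(* [Wh (zs (n + j))] has diameter [> 4 eps] but [prefix (S (n + j))] maps it into
   [prefix n (W (zs n))], with [W (zs n)] of diameter [< eps]. *)
Lemma prefix_inj m n : prefix m = prefix n -> m = n.
Proof.
  assert (Hlt : forall n j, prefix n <> prefix (S (n + j))).
  { intros n' j Heq. destruct (HC2 _ (zs_in (n' + j))) as [p1 [p2 [Hp1 [Hp2 Hd]]]].
    destruct (HC1 _ (zs_in n')) as [r [Hr Hdiam]].
    destruct (Wh_pullback n' j p1 Hp1) as [w1 [Hw1 E1]].
    destruct (Wh_pullback n' j p2 Hp2) as [w2 [Hw2 E2]].
    rewrite <- Heq in E1, E2. apply act_inj in E1, E2. subst.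
    pose proof (Hdiam _ _ Hw1 Hw2). lra. }
  intro Heq. destruct (Nat.lt_trichotomy m n) as [h|[h|h]]; auto; exfalso.
  - apply (Hlt m (n - m - 1)%nat). replace (S (m + (n - m - 1))) with n by lia. auto.
  - apply (Hlt n (m - n - 1)%nat). replace (S (n + (m - n - 1))) with m by lia. auto.
Qed.

Lemma cylinder_antimono k m xi : (k <= m)%nat -> cylinder m xi -> cylinder k xi.
Proof.
  intro Hkm. induction Hkm as [|m _ IH]; auto.
  intros [y [Hy ->]]. apply IH. exists (act (als m) y). split.
  - apply m_closure_self, W_act_label, closure_W_sub_Wh. auto.
  - apply act_prefixS.
Qed.

Lemma cylinders_meet : exists zeta, forall k, cylinder k zeta.
Proof.
  destruct (Hcpt (fun k => act (prefix k) (zs k)) (fun _ => I)) as [phi [Hphi [z [_ Hz]]]].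
  exists z. intro k. exists (act (inv (prefix k)) z). split; [|rewrite actKV; auto].
  intros s Hs. destruct (Hcont (inv (prefix k)) z (s / 2)) as [del [Hdel Hcontz]]; [lra|].
  destruct (Hz del Hdel) as [N HN].
  assert (Hcyl : cylinder k (act (prefix (phi (N + k)%nat)) (zs (phi (N + k)%nat)))).
  { apply (cylinder_antimono k (phi (N + k)%nat)).
    - pose proof (strictly_incr_ge phi Hphi (N + k)). lia.
    - exists (zs (phi (N + k)%nat)). split; auto.
      apply m_closure_self, (HC4 _ (zs_in _)). auto. }
  destruct Hcyl as [y [Hy Hyy]]. destruct (Hy (s / 2)) as [w [Hw Hdw]]; [lra|].
  exists w. split; auto.
  specialize (HN (N + k)%nat ltac:(lia)). rewrite dist_sym in HN.
  specialize (Hcontz _ HN). rewrite Hyy, actVK in Hcontz.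
  pose proof (dist_tri (act (inv (prefix k)) z) y w). lra.
Qed.

Lemma cylinder_pullback_far n m xi c : (n < m)%nat -> (forall k, cylinder k xi) ->
  (forall w, W (zs n) w -> c <> act (prefix n) w) ->
  eps < d (act (inv (prefix m)) xi) (act (inv (prefix m)) c).
Proof.
  intros Hnm Hxi Hc. destruct m as [|m]; [lia|].
  destruct (Hxi (S m)) as [y [Hy ->]]. rewrite actVK.
  apply (closure_W_far_from_compl_Wh m); auto. intro Hw.
  replace m with (n + (m - n))%nat in Hw by lia.
  destruct (Wh_pullback n (m - n) _ Hw) as [w [Hw1 Hw2]].
  replace (S (n + (m - n))) with (S m) in Hw2 by lia.
  rewrite actKV in Hw2. exact (Hc w Hw1 Hw2).
Qed.

Lemma exists_outside_prefix_W a : exists n c, (n <= 1)%nat /\ c <> a /\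
  forall w, W (zs n) w -> c <> act (prefix n) w.
Proof.
  apply NNPP. intro Hno.
  assert (Hall : forall n c, (n <= 1)%nat -> c <> a -> exists w, W (zs n) w /\ c = act (prefix n) w).
  { intros n c Hn Hca. apply NNPP. intro Hw. apply Hno. exists n, c.
    repeat split; auto. intros w Hw' Hcw. apply Hw. eauto. }
  destruct (HC2 _ (zs_in 0)) as [p1 [p2 [Hp1 [Hp2 Hd]]]].
  assert (HaW : ~ W (zs 0) a).
  { intro HaW. destruct (HC1 _ (zs_in 0)) as [r [Hr Hdiam]].
    assert (HW : forall c, W (zs 0) c).
    { intro c. destruct (classic (c = a)) as [->|Hca]; auto.
      destruct (Hall O c (le_S _ _ (le_n _)) Hca) as [w [Hw ->]]. simpl. rewrite act1. auto. }
    pose proof (Hdiam p1 p2 (HW _) (HW _)). lra. }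
  assert (HWh : forall q, Wh (zs 0) q -> W (zs 1) q).
  { intros q Hq. destruct (Hall 1%nat (act (als 0) q) (le_n _)) as [w [Hw Hqw]].
    - intro Hqa. apply HaW. rewrite <- Hqa. apply W_act_label. auto.
    - rewrite act_prefixS in Hqw. simpl in Hqw. rewrite act1 in Hqw.
      apply act_inj in Hqw. subst. auto. }
  destruct (HC1 _ (zs_in 1)) as [r [Hr Hdiam]].
  pose proof (Hdiam _ _ (HWh _ Hp1) (HWh _ Hp2)). lra.
Qed.

Theorem strict_coding_unique_conical : exists zeta,
  strict_codes mul e d act W zs als zeta /\
  (forall xi, strict_codes mul e d act W zs als xi -> xi = zeta) /\
  conical_limit_point d act zeta.
Proof.
  assert (Hinj : forall m n, inv (prefix m) = inv (prefix n) -> m = n)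
    by (intros m n H; apply prefix_inj, invg_inj, H).
  destruct (Hconv _ Hinj) as [phi [Hphi [a [b Hl]]]].
  destruct (exists_outside_prefix_W a) as [n0 [c [Hn0 [Hca Hc]]]].
  assert (Hcb : seq_converges d (fun k => act (inv (prefix (phi k))) c) b)
    by (apply (luc_const _ a); auto).
  assert (Hnot_b : forall xi psi, strictly_incr psi -> (forall k, cylinder k xi) ->
            ~ seq_converges d (fun k => act (inv (prefix (phi (psi k)))) xi) b).
  { intros xi psi Hpsi Hxi Hxib.
    destruct (converges_not_far _ _ b eps Heps Hxib (converges_subseq _ _ psi Hpsi Hcb) 2)
      as [k [Hk Hd]].
    apply (Rlt_asym _ _ Hd), (cylinder_pullback_far n0); auto.
    pose proof (strictly_incr_ge _ (strictly_incr_comp _ _ Hphi Hpsi) k). lia. }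
  assert (Huniq : forall xi, (forall k, cylinder k xi) -> xi = a).
  { intros xi Hxi. apply NNPP. intro Hxa. apply (Hnot_b xi (fun k => k)); auto.
    - intro; lia.
    - apply (luc_const _ a); auto. }
  destruct cylinders_meet as [zeta Hzeta]. rewrite (Huniq zeta Hzeta) in Hzeta.
  exists a. split; [exact Hzeta|split; [exact Huniq|]].
  destruct (Hcpt (fun k => act (inv (prefix (phi k))) a) (fun _ => I))
    as [psi [Hpsi [a' [_ Ha']]]].
  exists (fun k => inv (prefix (phi (psi k)))), a', b. split; [|split]; auto.
  - intros ->. exact (Hnot_b a psi Hpsi Hzeta Ha').
  - apply (luc_subseq (fun k => inv (prefix (phi k)))); auto.
Qed.

End Coding.

End BoundaryDynamics.

Lemma stabilizer_words {G B : Type} (mul : G -> G -> G) (e : G) (act : G -> B -> B)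
    (S : list G) (Ps : list (G -> Prop)) (B0 : B) (Pi : list B) :
  (forall i, (i < length Pi)%nat ->
     forall h, nth i Ps (fun _ => False) h <-> stabilizer act (nth i Pi B0) h) ->
  length Ps = length Pi ->
  (forall P, In P Ps -> forall g, P g ->
     exists l, Forall (fun s => In s S /\ P s) l /\ g = word_prod mul e l) ->
  forall p, In p Pi -> forall h, stabilizer act p h ->
    exists w, Forall (fun s => In s S /\ stabilizer act p s) w /\ h = word_prod mul e w.
Proof.
  intros Hnth Hlen HPgen p Hp h Hh.
  destruct (In_nth _ _ B0 Hp) as [i [Hi <-]].
  assert (HPi : In (nth i Ps (fun _ => False)) Ps) by (apply nth_In; lia).
  destruct (HPgen _ HPi h (proj2 (Hnth i Hi h) Hh)) as [w [Hw ->]].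
  exists w. split; auto. eapply Forall_impl; [|exact Hw].
  intros s [Hs HPs]. split; auto. apply (Hnth i Hi). auto.
Qed.

Theorem mainTheorem10
  (* the group Gamma *)
  (G : Type) (mul : G -> G -> G) (inv : G -> G) (e : G)
  (HG : is_group mul inv e)
  (* finite symmetric generating set S; the peripheral structure Ps *)
  (S : list G) (Ps : list (G -> Prop))
  (HSsym : forall s, In s S -> In (inv s) S)
  (HSgen : forall g, exists l, Forall (fun s => In s S) l /\ g = word_prod mul e l)
  (HPs_ne : Ps <> nil)
  (HPinf : forall P, In P Ps -> ~ finite_set P)
  (HPgen : forall P, In P Ps -> forall g, P g ->
             exists l, Forall (fun s => In s S /\ P s) l /\ g = word_prod mul e l)
  (* the Bowditch boundary (B, d) with the action of Gamma, and the set Pi *)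
  (B : Type) (B0 : B) (d : B -> B -> R) (act : G -> B -> B) (Pi : list B)
  (Hrh : rel_hyp_boundary mul inv e Ps B0 d act Pi)
  (Hnonelem : ~ finite_set (fun _ : B => True))
  (* the constant D *)
  (D : R) (HD0 : 0 < D)
  (HD : forall x y, x <> y -> exists g, D < d (act g x) (act g y))
  (* the compact sets K_p and the constant D_Pi *)
  (K : B -> B -> Prop) (DPi : R) (HDPi0 : 0 < DPi)
  (HK : forall p, In p Pi ->
     m_compact_set d (K p) /\ (forall x, K p x -> x <> p) /\
     (forall x, x <> p <-> exists h k, stabilizer act p h /\ K p k /\ x = act h k) /\
     diam_gt d (K p) DPi /\ setdist_gt d (K p) p DPi)
  (* the automaton data *)
  (eps : R) (Heps0 : 0 < eps) (HepsD : eps < D / 5) (HepsPi : eps < DPi / 5)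
  (Z : list B) (V W Vh Wh : B -> B -> Prop) (L : B -> G -> Prop) (alpha : B -> G)
  (Hconical : forall z, In z Z -> ~ in_parabolic_orbit act Pi z ->
     (forall a, L z a <-> a = alpha z) /\
     (forall y, Vh z y <-> V z (act (alpha z) y)) /\
     (forall y, Wh z y <-> W z (act (alpha z) y)))
  (Hparabolic : forall z g p, In z Z -> In p Pi -> z = act g p ->
     (exists F : G -> Prop, finite_set F /\
        forall a, L z a <-> (stabilizer act p (mul (inv g) a) /\ ~ F a)) /\
     (forall y, Vh z y -> Wh z y) /\ (forall y, Wh z y -> y <> p) /\
     ~ closed_nbhd d eps (Wh z) p)
  (Hopen : forall z, In z Z ->
     m_open_set d (V z) /\ m_open_set d (W z) /\ m_open_set d (Vh z) /\ m_open_set d (Wh z))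
  (Hcover : forall x, exists z, In z Z /\ V z x)
  (HC1 : forall z, In z Z -> diam_lt d (W z) eps)
  (HC2 : forall z, In z Z -> diam_gt d (Wh z) (4 * eps))
  (HC3 : forall z, In z Z -> forall x, closed_nbhd d (2 * eps) (Vh z) x -> Wh z x)
  (HC4 : forall z, In z Z -> forall x,
     W z x <-> (x = z \/ exists a y, L z a /\ Wh z y /\ x = act a y))
  (HC5 : forall z, In z Z ->
     (forall x, V z x <-> (x = z \/ exists a y, L z a /\ Vh z y /\ x = act a y)) /\
     (forall x, m_closure d (V z) x -> W z x))
  (HC6 : forall y z, In y Z -> In z Z ->
     ((forall x, ~ (m_closure d (Vh z) x /\ m_closure d (V y) x)) <->
      (forall x, ~ (Vh z x /\ V y x)))) :
  forall (g0 : G) (zs : nat -> B) (als : nat -> G),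
    edge_path Z Vh V L zs als ->
    exists x, gen_codes mul e d act W g0 zs als x /\
      (forall y, gen_codes mul e d act W g0 zs als y -> y = x) /\
      conical_limit_point d act x /\ ~ in_parabolic_orbit act Pi x.
Proof.
  intros g0 zs als Hpath.
  destruct Hrh as [Hmet [Hcpt [Hact [Hcont [Hconv [_ [Hlen [Hnth [Hbp _]]]]]]]]].
  destruct (strict_coding_unique_conical G mul inv e HG B d Hmet Hcpt act Hact Hcont Hconv
              eps Heps0 Z V W Vh Wh L HC1 HC2 HC3 HC4 (fun z Hz => proj2 (HC5 z Hz))
              zs als Hpath) as [zeta [Hcodes [Huniq Hzeta]]].
  pose proof (conical_limit_point_act G mul inv e HG B d Hmet act Hact Hcont) as Htransport.
  exists (act g0 zeta). split; [|split; [|split]].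
  - exists zeta. auto.
  - intros y [xi [Hxi ->]]. rewrite (Huniq xi Hxi). reflexivity.
  - apply Htransport. exact Hzeta.
  - intros [g [p [Hp Hxp]]].
    apply (parabolic_not_conical G mul inv e HG B d Hmet Hcpt act Hact Hcont Hconv Hnonelem
             p (proj1 (Hbp p Hp)) S (stabilizer_words mul e act S Ps B0 Pi Hnth Hlen HPgen p Hp)).
    rewrite <- (actVK G mul inv e HG B act Hact g p), <- Hxp.
    apply Htransport, Htransport. exact Hzeta.
Qed.
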